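(* Let $G$ be a finite nilpotent group. Then $P(G)$ is a cograph if and only if either $|G|$ is a power of a prime, or $G$ is cyclic of order $pq$ for distinct primes $p$ and $q$.
   Context: The power graph $P(G)$ of a group $G$ has vertex set $G$, with distinct $u,v$ adjacent if and only if $u=v^i$ or $v=u^j$ for some integers $i,j$. A cograph is a graph with no induced subgraph isomorphic to the path $P_4$ on four vertices. *)

From mathcomp Require Import all_boot all_fingroup all_solvable.
Set Implicit Arguments. Unset Strict Implicit. Unset Printing Implicit Defensive.
Local Open Scope group_scope.

Definition pg_adj (gT : finGroupType) (u v : gT) : bool :=
  (u != v) && ((u \in <[v]>) || (v \in <[u]>)).

Definition pg_has_induced_P4 (gT : finGroupType) (G : {set gT}) : Prop :=
  exists a b c d : gT,
    [/\ a \in G, b \in G, c \in G & d \in G] /\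
    [/\ a != b, a != c & a != d] /\ [/\ b != c, b != d & c != d] /\
    [/\ pg_adj a b, pg_adj b c & pg_adj c d] /\
    [/\ ~~ pg_adj a c, ~~ pg_adj b d & ~~ pg_adj a d].

Definition power_graph_cograph (gT : finGroupType) (G : {set gT}) : Prop :=
  ~ pg_has_induced_P4 G.

From mathcomp Require Import all_boot all_fingroup all_solvable.

(* In a p-group the powers of an element form a chain under
   "is a power of", which rules out an induced P4.  In a cyclic group u is a
   power of v iff #[u] divides #[v]; incomparable divisors of pq are primes,
   which is incompatible with the orders along an induced P4.

   In a nilpotent group elements of coprime orders commute, and the
   product path x - xy - y - yz is then induced as soon as x is not a power of
   yz and z is not a power of xy.  This, and a variant w - w' - w'y - y when p^2
   divides #[w], gives an induced P4 whenever G has three nontrivial elements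
   of pairwise coprime orders, or a nontrivial element of order prime to p
   together with two distinct subgroups of order p or an element of order
   divisible by p^2.  Hence if primes p != q divide |G|, with #[x] = p and
   #[y] = q, then G = <[x * y]> is cyclic of order pq. *)

Local Open Scope group_scope.

Definition dvd_comparable (m n : nat) : bool := (m %| n)%N || (n %| m)%N.

Lemma dvd_comparableC (m n : nat) : dvd_comparable m n = dvd_comparable n m.
Proof. exact: orbC. Qed.

Lemma comparable_primes {m n : nat} :
  prime m -> prime n -> dvd_comparable m n -> m = n.
Proof.
by move=> pm pn; rewrite /dvd_comparable !dvdn_prime2 // eq_sym orbb => /eqP.
Qed.

Lemma coprime_distinct_primes {p q : nat} :
  prime p -> prime q -> p != q -> coprime p q.
Proof. by move=> pp pq; rewrite prime_coprime // dvdn_prime2. Qed.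

Lemma dvdn_pq_cases {p q d : nat} : prime p -> prime q -> (d %| p * q)%N ->
  [\/ d = 1, d = p, d = q | d = p * q]%N.
Proof.
move=> pp pq d_pq; have [p_d|np_d] := boolP (p %| d)%N.
- move: d_pq; rewrite -(divnK p_d) mulnC dvdn_pmul2l ?prime_gt0 // => dp_q.
  have [->|dp1] := eqVneq (d %/ p)%N 1%N; first by rewrite muln1; constructor 2.
  by rewrite (prime_nt_dvdP pq dp1 dp_q); constructor 4.
- move: d_pq; rewrite Gauss_dvdr; last by rewrite coprime_sym prime_coprime.
  have [->|d1] := eqVneq d 1%N; first by constructor 1.
  by move/(prime_nt_dvdP pq d1); constructor 3.
Qed.

Lemma incomparable_dvd_pq_prime {p q m n : nat} :
  prime p -> prime q -> (m %| p * q)%N -> (n %| p * q)%N ->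
  ~~ dvd_comparable m n -> prime m.
Proof.
move=> pp pq m_pq n_pq; rewrite /dvd_comparable negb_or => /andP[mn nm].
have [m1|->|->|mpq] := dvdn_pq_cases pp pq m_pq => //.
- by rewrite m1 dvd1n in mn.
- by rewrite mpq n_pq in nm.
Qed.

Section PowerGraph.
Context {gT : finGroupType}.

Definition pg_apart (u v : gT) : bool := (u != v) && ~~ pg_adj u v.

Definition is_P4 (a b c d : gT) : bool :=
  [&& pg_adj a b, pg_adj b c & pg_adj c d] &&
  [&& pg_apart a c, pg_apart b d & pg_apart a d].

Lemma induced_P4P (G : {set gT}) :
  pg_has_induced_P4 G <->
  exists a b c d, [/\ a \in G, b \in G, c \in G, d \in G & is_P4 a b c d].
Proof.
split.
- case=> a [b [c [d [[aG bG cG dG] [[_ ac ad] [[_ bd _] [[ab bc cd] [nac nbd nad]]]]]]]].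
  exists a, b, c, d; split=> //.
  by rewrite /is_P4 /pg_apart ab bc cd ac nac bd nbd ad nad.
- case=> a [b [c [d [aG bG cG dG]]]].
  rewrite /is_P4; case/andP=> /and3P[ab bc cd].
  case/and3P=> /andP[ac nac] /andP[bd nbd] /andP[ad nad].
  move: (ab) (bc) (cd) => /andP[ab' _] /andP[bc' _] /andP[cd' _].
  by exists a, b, c, d; do !split.
Qed.

Lemma pg_adj_sym (u v : gT) : pg_adj u v = pg_adj v u.
Proof. by rewrite /pg_adj eq_sym orbC. Qed.

Lemma pg_apartE (u v : gT) :
  pg_apart u v = (u \notin <[v]>) && (v \notin <[u]>).
Proof.
rewrite /pg_apart /pg_adj negb_and negb_or negbK.
by case: eqVneq => [->|_] /=; rewrite ?cycle_id.
Qed.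

Lemma pg_apart_sym (u v : gT) : pg_apart u v = pg_apart v u.
Proof. by rewrite !pg_apartE andbC. Qed.

Lemma mem_cycle_trans {u v w : gT} : u \in <[v]> -> v \in <[w]> -> u \in <[w]>.
Proof. by rewrite -!cycle_subG; apply: subset_trans. Qed.

Lemma order_dvd_mem_cycle {u v : gT} : u \in <[v]> -> (#[u] %| #[v])%N.
Proof. by rewrite -cycle_subG => /cardSg. Qed.

Lemma pg_adj_comparable {u v : gT} : pg_adj u v -> dvd_comparable #[u] #[v].
Proof.
rewrite /dvd_comparable => /andP[_ /orP[/order_dvd_mem_cycle -> //|]].
by move/order_dvd_mem_cycle->; rewrite orbT.
Qed.

Lemma cyclic_mem_cycle {G : {group gT}} {u v : gT} :
  cyclic G -> u \in G -> v \in G -> (u \in <[v]>) = (#[u] %| #[v])%N.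
Proof.
by move=> cG uG vG; rewrite -cycle_subG (cardSg_cyclic cG) // cycle_subG.
Qed.

(* A cyclic group has a single cyclic subgroup of each order. *)
Lemma same_order_mem_cycle {g u v : gT} :
  u \in <[g]> -> v \in <[g]> -> #[v] = #[u] -> v \in <[u]>.
Proof.
by move=> ug vg ovu; rewrite (cyclic_mem_cycle (cycle_cyclic g) vg ug) ovu.
Qed.

Lemma pg_adj_mem_cycle {u v : gT} :
  u \in <[v]> -> ~~ (#[v] %| #[u])%N -> pg_adj u v.
Proof.
rewrite /pg_adj => -> ndvd; rewrite andbT.
by apply: contraNneq ndvd => ->.
Qed.

Lemma mem_cycle_coprime_eq1 {u v : gT} :
  coprime #[u] #[v] -> u \in <[v]> -> u = 1.
Proof.
by move=> co uv; apply/set1gP; rewrite -(coprime_TIg co) inE cycle_id.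
Qed.

Lemma coprime_pg_apart {u v : gT} :
  coprime #[u] #[v] -> u != 1 -> v != 1 -> pg_apart u v.
Proof.
move=> co u1 v1; rewrite pg_apartE; apply/andP; split.
  by apply: contra u1 => /(mem_cycle_coprime_eq1 co) ->.
by rewrite coprime_sym in co; apply: contra v1 => /(mem_cycle_coprime_eq1 co) ->.
Qed.

Lemma prime_order_neq1 {u : gT} : prime #[u] -> u != 1.
Proof. by rewrite -order_eq1; apply: contraTneq => ->. Qed.

Lemma cycle_coprime_product {u v : gT} :
  commute u v -> coprime #[u] #[v] ->
  [/\ u \in <[u * v]>, v \in <[u * v]> & #[u * v] = (#[u] * #[v])%N].
Proof.
move=> cuv co; rewrite orderM // cycleM //.
split=> //; first by rewrite -{1}(mulg1 u) mem_mulg ?cycle_id.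
by rewrite -{1}(mul1g v) mem_mulg ?cycle_id.
Qed.

Lemma pg_adj_mulL {u v : gT} :
  commute u v -> coprime #[u] #[v] -> v != 1 -> pg_adj u (u * v).
Proof.
move=> cuv co v1; have [u_uv _ _] := cycle_coprime_product cuv co.
by rewrite /pg_adj u_uv andbT -{1}(mulg1 u) (inj_eq (mulgI u)) eq_sym.
Qed.

Lemma pg_adj_mulR {u v : gT} :
  commute u v -> coprime #[u] #[v] -> u != 1 -> pg_adj (u * v) v.
Proof.
move=> cuv co u1; have [_ v_uv _] := cycle_coprime_product cuv co.
by rewrite /pg_adj v_uv orbT andbT -{2}(mul1g v) (inj_eq (mulIg v)).
Qed.

Lemma P4_product_path {x y z : gT} :
  commute x y -> coprime #[x] #[y] -> commute y z -> coprime #[y] #[z] ->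
  y != 1 -> x \notin <[y * z]> -> z \notin <[x * y]> ->
  is_P4 x (x * y) y (y * z).
Proof.
move=> cxy coxy cyz coyz y1 x_yz z_xy.
have [x_xy _ _] := cycle_coprime_product cxy coxy.
have [y_yz z_yz _] := cycle_coprime_product cyz coyz.
have x1 : x != 1 by apply: contraNneq x_yz => ->; apply: group1.
have z1 : z != 1 by apply: contraNneq z_xy => ->; apply: group1.
have coyx : coprime #[y] #[x] by rewrite coprime_sym.
apply/andP; split; apply/and3P; split.
- exact: pg_adj_mulL.
- exact: pg_adj_mulR.
- exact: pg_adj_mulL.
- exact: coprime_pg_apart coxy x1 y1.
- rewrite pg_apartE; apply/andP; split.
    by apply: contra x_yz => /(mem_cycle_trans x_xy).
  by apply: contra z_xy => /(mem_cycle_trans z_yz).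
- rewrite pg_apartE x_yz /=.
  by apply: contra y1 => /(mem_cycle_trans y_yz) /(mem_cycle_coprime_eq1 coyx) ->.
Qed.

End PowerGraph.

Section Sufficiency.
Context {gT : finGroupType}.

Lemma cyclic_pg_apart {G : {group gT}} {u v : gT} :
  cyclic G -> u \in G -> v \in G ->
  pg_apart u v = ~~ dvd_comparable #[u] #[v].
Proof.
move=> cG uG vG.
by rewrite pg_apartE (cyclic_mem_cycle cG uG vG) (cyclic_mem_cycle cG vG uG) negb_or.
Qed.

Lemma pelt_cycle_chain (p : nat) {w u v : gT} :
  p.-elt w -> u \in <[w]> -> v \in <[w]> -> (u \in <[v]>) || (v \in <[u]>).
Proof.
move=> pw uw vw; have cw := cycle_cyclic w.
rewrite (cyclic_mem_cycle cw uw vw) (cyclic_mem_cycle cw vw uw).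
have [i ->] := p_natP (pnat_dvd (order_dvd_mem_cycle uw) pw).
have [j ->] := p_natP (pnat_dvd (order_dvd_mem_cycle vw) pw).
case: (leqP i j) => [le_ij|/ltnW le_ji]; first by rewrite dvdn_exp2l.
by rewrite (dvdn_exp2l _ le_ji) orbT.
Qed.

Lemma pelt_no_P4_step (p : nat) {b c d : gT} :
  p.-elt c -> b \in <[c]> -> pg_adj c d -> ~~ pg_apart b d.
Proof.
move=> pc bc /andP[_ cd]; rewrite pg_apartE negb_and !negbK.
case/orP: cd => [cd | dc]; first by rewrite (mem_cycle_trans bc cd).
exact: pelt_cycle_chain pc bc dc.
Qed.

Lemma pgroup_cograph (p : nat) (G : {group gT}) :
  p.-group G -> power_graph_cograph G.
Proof.
move=> pG /induced_P4P[a [b [c [d [_ bG cG _]]]]].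
case/andP=> /and3P[ab bc cd] /and3P[ac bd _].
case/andP: (bc) => _ /orP[b_c | c_b].
- by move: bd; apply/negP; apply: pelt_no_P4_step (mem_p_elt pG cG) b_c cd.
- move: ac; rewrite pg_apart_sym; apply/negP.
  by apply: pelt_no_P4_step (mem_p_elt pG bG) c_b _; rewrite pg_adj_sym.
Qed.

(* In a cyclic group of order pq, an induced path a - b - c - d forces the
   orders of a, b, c to be primes that are pairwise equal, which contradicts
   the incomparability of #[a] and #[c]. *)
Lemma cyclic_pq_cograph (p q : nat) (G : {group gT}) :
  prime p -> prime q -> cyclic G -> #|G| = (p * q)%N -> power_graph_cograph G.
Proof.
move=> pp pq cycG oG /induced_P4P[a [b [c [d [aG bG cG dG]]]]].
case/andP=> /and3P[ab bc _] /and3P[ac bd _].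
rewrite (cyclic_pg_apart cycG aG cG) in ac.
rewrite (cyclic_pg_apart cycG bG dG) in bd.
have dvdG u : u \in G -> (#[u] %| p * q)%N by rewrite -oG; apply: order_dvdG.
have prime_a := incomparable_dvd_pq_prime pp pq (dvdG a aG) (dvdG c cG) ac.
rewrite dvd_comparableC in ac.
have prime_c := incomparable_dvd_pq_prime pp pq (dvdG c cG) (dvdG a aG) ac.
have prime_b := incomparable_dvd_pq_prime pp pq (dvdG b bG) (dvdG d dG) bd.
have ab_eq := comparable_primes prime_a prime_b (pg_adj_comparable ab).
have bc_eq := comparable_primes prime_b prime_c (pg_adj_comparable bc).
by rewrite ab_eq bc_eq /dvd_comparable dvdnn in ac.
Qed.

End Sufficiency.

Section Necessity.
Context {gT : finGroupType} (G : {group gT}).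
Hypothesis nilG : nilpotent G.

Lemma nilpotent_coprime_commute {u v : gT} :
  u \in G -> v \in G -> coprime #[u] #[v] -> commute u v.
Proof.
move=> uG vG co; have sUG : <[u]> \subset G by rewrite cycle_subG.
have sVG : <[v]> \subset G by rewrite cycle_subG.
have := sub_nilpotent_cent2 nilG sUG sVG co.
rewrite cycle_subG => vCu.
by apply/esym/cent1P; rewrite -cent_cycle.
Qed.

Lemma P4_of_three_coprime_elements {x y z : gT} :
  x \in G -> y \in G -> z \in G -> x != 1 -> y != 1 -> z != 1 ->
  coprime #[x] #[y] -> coprime #[y] #[z] -> coprime #[x] #[z] ->
  pg_has_induced_P4 G.
Proof.
move=> xG yG zG x1 y1 z1 coxy coyz coxz.
have cxy := nilpotent_coprime_commute xG yG coxy.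
have cyz := nilpotent_coprime_commute yG zG coyz.
have [_ _ o_xy] := cycle_coprime_product cxy coxy.
have [_ _ o_yz] := cycle_coprime_product cyz coyz.
have co_x_yz : coprime #[x] #[y * z] by rewrite o_yz coprimeMr coxy coxz.
have co_z_xy : coprime #[z] #[x * y].
  by rewrite o_xy coprimeMr !(coprime_sym #[z]) coxz coyz.
apply/induced_P4P; exists x, (x * y), y, (y * z); split; rewrite ?groupM //.
apply: P4_product_path => //.
  by apply: contra x1 => /(mem_cycle_coprime_eq1 co_x_yz) ->.
by apply: contra z1 => /(mem_cycle_coprime_eq1 co_z_xy) ->.
Qed.

Lemma P4_of_two_cycles_same_order {x w y : gT} :
  x \in G -> w \in G -> y \in G -> #[w] = #[x] -> coprime #[x] #[y] ->
  y != 1 -> w \notin <[x]> -> pg_has_induced_P4 G.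
Proof.
move=> xG wG yG owx coxy y1 w_x.
have coyw : coprime #[y] #[w] by rewrite owx coprime_sym.
have cxy := nilpotent_coprime_commute xG yG coxy.
have cyw := nilpotent_coprime_commute yG wG coyw.
have [x_xy _ _] := cycle_coprime_product cxy coxy.
have [_ w_yw _] := cycle_coprime_product cyw coyw.
apply/induced_P4P; exists x, (x * y), y, (y * w); split; rewrite ?groupM //.
apply: P4_product_path => //.
  by apply: contra w_x => x_yw; apply: same_order_mem_cycle x_yw w_yw owx.
by apply: contra w_x => w_xy; apply: same_order_mem_cycle x_xy w_xy owx.
Qed.

Lemma P4_of_square_prime_order {p : nat} {w y : gT} :
  prime p -> w \in G -> y \in G -> (p ^ 2 %| #[w])%N ->
  coprime #[w] #[y] -> y != 1 -> pg_has_induced_P4 G.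
Proof.
move=> pp wG yG p2_w cowy y1.
have p_w : (p %| #[w])%N by apply: dvdn_trans p2_w; rewrite expnS dvdn_mulr.
set w' := w ^+ (#[w] %/ p).
have o_w' : #[w'] = p.
  by rewrite orderXdiv ?dvdn_div // divnA // mulKn.
have w'_w : w' \in <[w]> := mem_cycle w _.
have w'1 : w' != 1 by apply: prime_order_neq1; rewrite o_w'.
have w1 : w != 1 by apply: contraNneq w'1 => w_eq1; rewrite /w' w_eq1 expg1n.
have cow'y : coprime #[w'] #[y] by rewrite o_w'; apply: coprime_dvdl cowy.
have cw'y := nilpotent_coprime_commute (groupX _ wG) yG cow'y.
have [_ y_w'y o_w'y] := cycle_coprime_product cw'y cow'y.
have np_y : ~~ (p %| #[y])%N by rewrite -prime_coprime // -o_w'.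
apply/induced_P4P; exists w, w', (w' * y), y.
split; rewrite ?groupM ?groupX //.
apply/andP; split; apply/and3P; split.
- rewrite pg_adj_sym; apply: pg_adj_mem_cycle w'_w _; rewrite o_w'.
  apply/negP => /(dvdn_trans p2_w).
  by rewrite -[X in _ %| X]expn1 dvdn_Pexp2l // prime_gt1.
- exact: pg_adj_mulL.
- exact: pg_adj_mulR.
- rewrite pg_apartE; apply/andP; split.
    apply/negP => /order_dvd_mem_cycle; rewrite o_w'y o_w' => /(dvdn_trans p2_w).
    by rewrite expnS expn1 dvdn_pmul2l ?prime_gt0 // (negbTE np_y).
  rewrite coprime_sym in cowy.
  by apply: contra y1 => /(mem_cycle_trans y_w'y) /(mem_cycle_coprime_eq1 cowy) ->.
- exact: coprime_pg_apart cow'y w'1 y1.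
- exact: coprime_pg_apart cowy w1 y1.
Qed.

Hypothesis cographG : power_graph_cograph G.

Lemma p_elt_mem_cycle {p : nat} {x y w : gT} :
  prime p -> x \in G -> y \in G -> w \in G -> #[x] = p ->
  coprime p #[y] -> y != 1 -> p.-elt w -> w \in <[x]>.
Proof.
move=> pp xG yG wG ox copy y1 pw; have [n o_w] := p_natP pw.
case: n o_w => [|[|n]] o_w.
- by move/eqP: o_w; rewrite expn0 order_eq1 => /eqP->; apply: group1.
- apply/negPn/negP => w_x; apply: cographG.
  by apply: (P4_of_two_cycles_same_order xG wG yG _ _ y1 w_x); rewrite ?ox ?o_w.
- exfalso; apply: cographG.
  apply: (P4_of_square_prime_order pp wG yG _ _ y1); rewrite o_w.
    by rewrite dvdn_exp2l.
  by rewrite coprime_pexpl.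
Qed.

(* With #[x] = p and #[y] = q distinct primes, every p'-element h of G is a
   power of y: a q-element by the previous lemma, and a prime divisor r of
   #[h] other than q would yield elements of three distinct prime orders. *)
Lemma p'_elt_mem_cycle {p q : nat} {x y h : gT} :
  prime p -> prime q -> p != q -> x \in G -> y \in G -> h \in G ->
  #[x] = p -> #[y] = q -> p^'.-elt h -> h \in <[y]>.
Proof.
move=> pp pq npq xG yG hG ox oy p'h.
have x1 : x != 1 by apply: prime_order_neq1; rewrite ox.
have y1 : y != 1 by apply: prime_order_neq1; rewrite oy.
have [qh|] := boolP (q.-elt h).
  apply: (p_elt_mem_cycle pq yG xG hG oy _ x1 qh).
  by rewrite ox (coprime_distinct_primes pq pp) // eq_sym.
rewrite /p_elt /pnat order_gt0 /= => /allPn[r r_h nrq].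
have nrp : r != p := pnatPpi p'h r_h.
move: r_h; rewrite mem_primes => /and3P[pr _ r_dvd_h].
have [z z_h oz] := Cauchy pr r_dvd_h.
have zG : z \in G by apply: subsetP z_h; rewrite cycle_subG.
exfalso; apply: cographG.
apply: (P4_of_three_coprime_elements xG yG zG x1 y1).
- by apply: prime_order_neq1; rewrite oz.
- by rewrite ox oy (coprime_distinct_primes pp pq).
- by rewrite oy oz (coprime_distinct_primes pq pr) // eq_sym.
- by rewrite ox oz (coprime_distinct_primes pp pr) // eq_sym.
Qed.

Lemma cograph_two_primes_cyclic {p q : nat} :
  prime p -> prime q -> p != q -> (p %| #|G|)%N -> (q %| #|G|)%N ->
  cyclic G /\ #|G| = (p * q)%N.
Proof.
move=> pp pq npq p_G q_G.
have [x xG ox] := Cauchy pp p_G; have [y yG oy] := Cauchy pq q_G.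
have coxy : coprime #[x] #[y] by rewrite ox oy coprime_distinct_primes.
have cxy := nilpotent_coprime_commute xG yG coxy.
have G_xy : G :=: <[x * y]>.
  apply/eqP; rewrite eqEsubset cycle_subG groupM // andbT.
  apply/subsetP => g gG; have gpi pi : g.`_pi \in G.
    by apply: subsetP (cycle_constt pi g); rewrite cycle_subG.
  rewrite -(consttC p g) cycleM // mem_mulg //.
    apply: (p_elt_mem_cycle pp xG yG (gpi _) ox _ _ (p_elt_constt p g)).
      by rewrite -ox.
    by apply: prime_order_neq1; rewrite oy.
  exact: p'_elt_mem_cycle pp pq npq xG yG (gpi _) ox oy (p_elt_constt _ g).
split; first by apply/cyclicP; exists (x * y).
have <- : #[x * y] = (p * q)%N by rewrite orderM // ox oy.
by rewrite G_xy.
Qed.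

End Necessity.

Lemma second_prime_divisor {n : nat} :
  ~~ (pdiv n).-nat n -> 0 < n -> exists2 q, prime q & (q %| n)%N /\ pdiv n != q.
Proof.
move=> npn n_gt0; move: npn; rewrite /pnat n_gt0 /= => /allPn[q].
rewrite mem_primes => /and3P[pq _ q_n] nqp.
by exists q => //; split; rewrite // eq_sym.
Qed.

Theorem mainTheorem5 (gT : finGroupType) (G : {group gT}) :
  nilpotent G ->
  (power_graph_cograph G <->
   ((exists p k : nat, prime p /\ #|G| = (p ^ k)%N) \/
    (exists p q : nat, [/\ prime p, prime q, p != q,
                          cyclic G & #|G| = (p * q)%N]))).
Proof.
move=> nilG; split=> [cographG | [[p [k [pp oG]]] | [p [q [pp pq _ cycG oG]]]]].
- have [G1|G_gt1] := leqP #|G| 1.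
    by left; exists 2, 0; split => //; apply/eqP; rewrite eqn_leq G1 cardG_gt0.
  have pp : prime (pdiv #|G|) := pdiv_prime G_gt1.
  have [pG|npG] := boolP ((pdiv #|G|).-nat #|G|).
    by left; have [k oG] := p_natP pG; exists (pdiv #|G|), k.
  have [q pq [q_G nqp]] := second_prime_divisor npG (cardG_gt0 G).
  have [cycG oG] :=
    cograph_two_primes_cyclic G nilG cographG pp pq nqp (pdiv_dvd _) q_G.
  by right; exists (pdiv #|G|), q.
- by apply: (pgroup_cograph p); rewrite /pgroup oG pnatX pnat_id.
- exact: cyclic_pq_cograph pp pq cycG oG.
Qed.
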